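(* Let $\lambda>0$, $\lambda_{max}>0$, $p\in(0,1]$, $r(q)=\min\{p/q,1\}$ for $q\in(0,1]$, and $\mathrm{TH}(q,\tilde q)=r(q)q\exp\!\big(-\frac{\lambda r(\tilde q)\tilde q}{\lambda_{max}}\big)$ for $q,\tilde q\in[0,1]$ (with $r(0)\cdot0=0$). Define the price of anarchy $$\mathrm{PoA}=\frac{\sup_{q\in(0,1]}\lambda\, r(q)q\exp\!\big(-\frac{\lambda r(q)q}{\lambda_{max}}\big)}{\inf_{q^*\ \mathrm{SNE}}\lambda\,\mathrm{TH}(q^*,q^* )},$$ where $q^*\in[0,1]$ is a symmetric Nash equilibrium (SNE) if $\mathrm{TH}(q^*,q^* )=\max_{q\in[0,1]}\mathrm{TH}(q,q^* )$. Then $\mathrm{PoA}=1$ if $p<\frac{\lambda_{max}}{\lambda}$, and $\mathrm{PoA}=\frac{\lambda_{max}}{e\,p\,\lambda\exp(-p\lambda/\lambda_{max})}$ otherwise.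
   Context: ALOHA model with energy-harvesting transmitters (energy arrivals i.i.d. Bernoulli($p$) per slot, infinite battery) located as a homogeneous Poisson point process of density $\lambda$ in $\mathbb{R}^2$; $r(q)$ is the stationary probability of a nonempty battery, $\mathrm{TH}(q,\tilde q)$ the throughput of a transmitter using probability $q$ while all others use $\tilde q$, the numerator of PoA is the globally optimal transmission capacity and the denominator is the transmission capacity at the worst SNE; $\lambda_{max}=\frac{1}{d^2\theta^{2/\alpha}\kappa(\alpha)}$, $\kappa(\alpha)=\frac{2\pi^2}{\alpha\sin(2\pi/\alpha)}$. *)

From mathcomp Require Import all_boot all_order all_algebra.
From mathcomp Require Import all_classical all_reals all_analysis.
Set Implicit Arguments. Unset Strict Implicit. Unset Printing Implicit Defensive.
Import Order.TTheory GRing.Theory Num.Theory.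
Local Open Scope classical_set_scope.
Local Open Scope ring_scope.

(* r(q) = min{p/q, 1}; note that r 0 * 0 = 0 since the product is taken explicitly. *)
Definition rbat {R : realType} (p q : R) : R := Num.min (p / q) 1.

Definition TH {R : realType} (lambda lmax p q qt : R) : R :=
  rbat p q * q * expR (- (lambda * (rbat p qt * qt)) / lmax).

(* qs is a symmetric Nash equilibrium: qs in [0,1] and TH(qs,qs) is the max over q in [0,1]
   of TH(q, qs) (i.e. it is an upper bound, being itself attained at q = qs). *)
Definition SNE {R : realType} (lambda lmax p qs : R) : Prop :=
  0 <= qs <= 1 /\ (forall q : R, 0 <= q <= 1 -> TH lambda lmax p q qs <= TH lambda lmax p qs qs).

Definition PoA {R : realType} (lambda lmax p : R) : R :=
  sup [set lambda * (rbat p q * q) * expR (- (lambda * (rbat p q * q)) / lmax)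
        | q in [set q : R | 0 < q <= 1]]
  / inf [set lambda * TH lambda lmax p qs qs | qs in [set qs : R | SNE lambda lmax p qs]].

From mathcomp Require Import all_boot all_order all_algebra.
From mathcomp Require Import all_classical all_reals all_analysis.
From mathcomp Require Import ring lra.
Import Order.TTheory GRing.Theory Num.Theory.
Local Open Scope classical_set_scope.
Local Open Scope ring_scope.

(* Since r(q) q = min(p, q), every throughput has the shape s exp(-s/lmax) with
   s = lambda min(p, q).  The map s |-> s exp(-s/lmax) increases on [0, lmax] and
   is maximal at s = lmax with value lmax/e; hence the global optimum is reached
   at s = lambda p if lambda p < lmax and at s = lmax otherwise.  On the other side,
   the equilibria are exactly the q* in [p, 1], all of which have throughput
   lambda p exp(-lambda p/lmax). *)

Section Throughput.
Context {R : realType}.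
Implicit Types lambda lmax p q qt m s x y : R.

Lemma rbat_mul p q : 0 < p -> 0 <= q -> rbat p q * q = Num.min p q.
Proof.
move=> p_gt0; rewrite le_eqVlt => /predU1P[<-|q_gt0].
  by rewrite mulr0 (min_r (ltW p_gt0)).
by rewrite /rbat minr_pMl ?ltW // divfK ?gt_eqF // mul1r.
Qed.

Lemma TH_min lambda lmax p q qt : 0 < p -> 0 <= q -> 0 <= qt ->
  TH lambda lmax p q qt = Num.min p q * expR (- (lambda * Num.min p qt) / lmax).
Proof. by move=> p_gt0 q_ge0 qt_ge0; rewrite /TH !rbat_mul. Qed.

Lemma mul_expRN_le t : t * expR (- t) <= expR (-1) :> R.
Proof.
have := expR_ge1Dx (t - 1); rewrite addrCA subrr addr0 expRD => t_le.
have := ler_wpM2r (ltW (expR_gt0 (- t))) t_le.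
by rewrite mulrAC -expRD subrr expR0 mul1r.
Qed.

Lemma mul_expR_divN_le m s : 0 < m -> s * expR (- s / m) <= m / expR 1.
Proof.
move=> m_gt0; have -> : s = m * (s / m) by rewrite mulrC divfK ?gt_eqF.
set t := s / m; rewrite mulNr [m * t]mulrC mulfK ?gt_eqF //.
by rewrite [t * m]mulrC -mulrA -expRN ler_pM2l // mul_expRN_le.
Qed.

Lemma mul_expR_divN_le_mono m x y : 0 < m -> 0 <= x <= y -> y <= m ->
  x * expR (- x / m) <= y * expR (- y / m).
Proof.
move=> m_gt0 /andP[x_ge0 x_le_y] y_le_m.
set d := (y - x) / m.
have y_split : - y / m = - d + - x / m by rewrite /d; field; rewrite gt_eqF.
rewrite y_split expRD mulrA ler_pM2r ?expR_gt0 //.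
have yd_le : y * d <= y - x.
  have -> : y * d = y / m * (y - x) by rewrite /d; field; rewrite gt_eqF.
  by rewrite -[leRHS]mul1r ler_wpM2r ?subr_ge0 // ler_pdivrMr // mul1r.
have y_ge0 : 0 <= y by lra.
have := ler_wpM2l y_ge0 (expR_ge1Dx (- d)); rewrite mulrDr mulr1 mulrN; lra.
Qed.

Lemma SNE_iff lambda lmax p qs : 0 < p <= 1 ->
  SNE lambda lmax p qs <-> p <= qs <= 1.
Proof.
move=> /andP[p_gt0 p_le1]; set E := expR (- (lambda * Num.min p qs) / lmax).
have E_gt0 : 0 < E by exact: expR_gt0.
split.
  move=> [/andP[qs_ge0 qs_le1] best]; rewrite qs_le1 andbT.
  have := best 1; rewrite ler01 lexx !TH_min // ?ler01 // -/E.
  by rewrite ler_pM2r // (min_l p_le1) le_min lexx => /(_ isT).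
move=> /andP[p_le_qs qs_le1]; have qs_ge0 : 0 <= qs by lra.
split=> [|q /andP[q_ge0 _]]; first by rewrite qs_ge0.
by rewrite !TH_min // -/E ler_pM2r // (min_l p_le_qs) ge_min lexx.
Qed.

End Throughput.

Lemma sup_eq_max (R : realType) (E : set R) (M : R) :
  E M -> ubound E M -> sup E = M.
Proof.
move=> EM ubM; apply/le_anti; rewrite ge_sup //; last by exists M.
by apply: ub_le_sup => //; exists M.
Qed.

Theorem lemma2 (R : realType) (lambda lmax p : R) :
  0 < lambda -> 0 < lmax -> 0 < p <= 1 ->
  PoA lambda lmax p =
    (if p < lmax / lambda then 1
     else lmax / (expR 1 * p * lambda * expR (- (p * lambda) / lmax))).
Proof.
move=> lambda_gt0 lmax_gt0 p01; have /andP[p_gt0 p_le1] := p01.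
pose f s := s * expR (- s / lmax).
have equilibria : [set lambda * TH lambda lmax p qs qs
                    | qs in [set qs | SNE lambda lmax p qs]] = [set f (lambda * p)].
  apply/seteqP; split=> [_ [qs /(SNE_iff _ _ _ _ p01) /andP[p_le_qs _] <-]|_ ->] /=.
    have qs_ge0 : 0 <= qs by lra.
    by rewrite TH_min ?(min_l p_le_qs) ?mulrA // ltW.
  exists p; first by apply/(SNE_iff _ _ _ _ p01); rewrite lexx p_le1.
  by rewrite TH_min ?minxx ?mulrA // ltW.
have optimum :
    [set lambda * (rbat p q * q) * expR (- (lambda * (rbat p q * q)) / lmax)
      | q in [set q | 0 < q <= 1]]
    = [set f (lambda * Num.min p q) | q in [set q | 0 < q <= 1]].
  by apply: eq_imagel => q /andP[q_gt0 _]; rewrite rbat_mul // ltW.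
rewrite /PoA equilibria inf1 optimum; case: ifPn => [p_small|p_large].
  have lambdap_le : lambda * p <= lmax by rewrite mulrC -ler_pdivlMr // ltW.
  rewrite (@sup_eq_max _ _ (f (lambda * p))) ?divff ?gt_eqF ?mulr_gt0 ?expR_gt0 //.
    by exists p; rewrite ?minxx //= p_gt0.
  move=> _ [q /andP[q_gt0 _] <-]; apply: mul_expR_divN_le_mono => //.
  have min_ge0 : 0 <= Num.min p q by rewrite le_min !ltW.
  by rewrite mulr_ge0 ?(ltW lambda_gt0) //= ler_pM2l // ge_min lexx.
have lmax_le : lmax / lambda <= p by rewrite leNgt.
rewrite (@sup_eq_max _ _ (lmax / expR 1)).
- by rewrite /f [p * lambda]mulrC; field; rewrite !gt_eqF ?expR_gt0.
- exists (lmax / lambda); first by rewrite /= divr_gt0 // (le_trans lmax_le).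
  rewrite (min_r lmax_le) [lambda * _]mulrC divfK ?gt_eqF //.
  by rewrite /f mulNr mulfV ?gt_eqF // expRN.
- by move=> _ [q _ <-]; apply: mul_expR_divN_le.
Qed.
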